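(* In the discrete scheme described in the context, suppose that for some parcels $j_1,j_2\in\{1,\dots,n\}$ and some integer $k\ge0$ one has $\alpha_{k\delta t}(j_1)<\alpha_{k\delta t}(j_2)$ and $\alpha_{(k+1)\delta t}(j_1)>\alpha_{(k+1)\delta t}(j_2)$. Then $\theta^M_{j_1}>\theta^M_{j_2}$. In particular $\alpha_{l\delta t}(j_1)>\alpha_{l\delta t}(j_2)$ for all $l>k$.
   Context: $Q^{sat}:\mathbb{R}^3\to\mathbb{R}$ is smooth with $\partial_\theta Q^{sat}>0$, $\partial_zQ^{sat}<0$. $\Theta(w,z,t)$ is the solution $\theta$ of $\theta+Q^{sat}(\theta,z,t)=w$ (assumed well defined), with $\partial_w\Theta>0$, $\partial_z\Theta>0$. Discrete scheme. Fix $n\ge1$, $\delta t>0$, $z_i=i/n$. There are $n$ parcels $j=1,\dots,n$; initially parcel $j$ is at position $j$ with value $\theta^n_j$, where $\theta^n_1\le\dots\le\theta^n_n$ and $q^n_j\le Q^{sat}(\theta^n_j,z_j,0)$; parcel $j$ carries the fixed number $\theta^M_j=\theta^n_j+q^n_j$. One time step from $k\delta t$ to $(k+1)\delta t$, with $\tau=(k+1)\delta t$: positions $m=n,\dots,1$ are processed in this order. At stage $m$, with current configuration (parcel $p(i)$ at position $i$ with value $\vartheta_i$), position $i$ is wet if $\vartheta_i<\Theta(\theta^M_{p(i)},z_i,\tau)$; a wet position $i_0\le m$ is eligible if for every $i$ with $i_0<i\le m$, either $i$ is not wet and $\vartheta_i<\Theta(\theta^M_{p(i_0)},z_i,\tau)$,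 or $i$ is wet and $\theta^M_{p(i_0)}>\theta^M_{p(i)}$. If some position is eligible, let $i_*$ be the eligible position whose parcel has the largest $\theta^M$ (largest position in case of ties); that parcel moves to position $m$ with new value $\Theta(\theta^M_{p(i_* )},z_m,\tau)$, the parcels at $i_*+1,\dots,m$ move down one position keeping their values, others unchanged; otherwise nothing changes. After stage $1$ one has the configuration at time $(k+1)\delta t$. $\alpha_{k\delta t}(j)$ denotes the position of parcel $j$ after $k$ time steps ($\alpha_0=id$). *)

From Stdlib Require Import Reals Arith.
Open Scope R_scope.

(* A configuration of the discrete scheme: position i (1 <= i <= n) holds
   parcel [par c i] with current value [val c i].  Entries at positions
   outside 1..n are irrelevant. *)
Record config := mkConfig { par : nat -> nat ; val : nat -> R }.

Definition zpt (n i : nat) : R := INR i / INR n.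

Section Scheme.
Variables (n : nat) (Theta : R -> R -> R -> R) (thM : nat -> R) (tau : R).

Definition wet (c : config) (i : nat) : Prop :=
  val c i < Theta (thM (par c i)) (zpt n i) tau.

Definition eligible (c : config) (m i0 : nat) : Prop :=
  (1 <= i0 <= m)%nat /\ wet c i0 /\
  forall i, (i0 < i <= m)%nat ->
    (~ wet c i /\ val c i < Theta (thM (par c i0)) (zpt n i) tau)
    \/ (wet c i /\ thM (par c i0) > thM (par c i)).

Definition selected (c : config) (m is : nat) : Prop :=
  eligible c m is /\
  forall i, eligible c m i ->
    thM (par c i) <= thM (par c is) /\
    (thM (par c i) = thM (par c is) -> (i <= is)%nat).

(* parcel at i_* moves to position m with new value Theta(theta^M, z_m, tau);
   parcels at i_*+1..m move down by one keeping their values *)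
Definition move (c : config) (m is : nat) : config :=
  mkConfig
    (fun i => if Nat.eqb i m then par c is
              else if andb (Nat.leb is i) (Nat.ltb i m) then par c (S i)
              else par c i)
    (fun i => if Nat.eqb i m then Theta (thM (par c is)) (zpt n m) tau
              else if andb (Nat.leb is i) (Nat.ltb i m) then val c (S i)
              else val c i).

Definition stage (m : nat) (c c' : config) : Prop :=
  (exists is, selected c m is /\ c' = move c m is)
  \/ ((forall i, ~ eligible c m i) /\ c' = c).

Fixpoint stages (m : nat) (c c' : config) : Prop :=
  match m with
  | O => c' = c
  | S m' => exists c1, stage (S m') c c1 /\ stages m' c1 c'
  end.

Definition time_step (c c' : config) : Prop := stages n c c'.

End Scheme.

(* parcel j is at position i (1 <= i <= n) in configuration c,
   i.e. alpha(j) = i *)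
Definition at_pos (n : nat) (c : config) (j i : nat) : Prop :=
  (1 <= i <= n)%nat /\ par c i = j.

(* A parcel j1 can pass above a parcel j2 during a stage only by being the
   selected parcel: it leaves its position i_* below j2 and is put at the
   stage position m above it.  Eligibility of i_* then says that j2, sitting
   between i_* and m, is either wet with theta^M_j2 < theta^M_j1, or dry with
   value below Theta(theta^M_j1, z, tau); in the dry case monotonicity of Theta
   in w (from d_w Theta > 0) again gives theta^M_j2 < theta^M_j1.  As theta^M
   is attached to the parcels, no later time step can undo the crossing. *)

From Stdlib Require Import Reals Lia Lra ClassicalEpsilon.
Open Scope R_scope.

Lemma nondecreasing_of_derivative_nonneg (f : R -> R) :
  (forall x, exists d, derivable_pt_lim f x d /\ 0 <= d) ->
  forall x y, x <= y -> f x <= f y.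
Proof.
  intros Hf x y Hxy.
  destruct (Req_dec x y) as [<- | Hne]; [lra |].
  set (f' := fun t => proj1_sig (constructive_indefinite_description _ (Hf t))).
  assert (Hf' : forall t, derivable_pt_lim f t (f' t) /\ 0 <= f' t).
  { intro t; exact (proj2_sig (constructive_indefinite_description _ (Hf t))). }
  destruct (MVT_cor2 f f' x y) as [c [Hc _]]; [lra | intros t _; apply Hf' |].
  pose proof (Rmult_le_pos (f' c) (y - x) (proj2 (Hf' c)) ltac:(lra)).
  lra.
Qed.

Definition par_injective (n : nat) (c : config) : Prop :=
  forall i i', (1 <= i <= n)%nat -> (1 <= i' <= n)%nat -> par c i = par c i' -> i = i'.

Lemma at_pos_unique n c j a b :
  par_injective n c -> at_pos n c j a -> at_pos n c j b -> a = b.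
Proof. intros Hi [Ha Ea] [Hb Eb]; apply Hi; congruence. Qed.

Lemma at_pos_par_inj n c j j' a :
  at_pos n c j a -> at_pos n c j' a -> j = j'.
Proof. intros [_ E] [_ E']; congruence. Qed.

(* [move c m is] reads position [i] from [move_src m is i] and sends the
   content of position [i] of [c] to [move_dst m is i]. *)
Definition move_src (m is i : nat) : nat :=
  if Nat.eqb i m then is else if andb (Nat.leb is i) (Nat.ltb i m) then S i else i.

Definition move_dst (m is i : nat) : nat :=
  if Nat.eqb i is then m else if andb (Nat.ltb is i) (Nat.leb i m) then pred i else i.

Ltac nat_cases := repeat match goal with
  | |- context [Nat.eqb ?a ?b] => destruct (Nat.eqb_spec a b)
  | |- context [Nat.leb ?a ?b] => destruct (Nat.leb_spec a b)
  | |- context [Nat.ltb ?a ?b] => destruct (Nat.ltb_spec a b)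
  | H : context [Nat.eqb ?a ?b] |- _ => destruct (Nat.eqb_spec a b)
  | H : context [Nat.leb ?a ?b] |- _ => destruct (Nat.leb_spec a b)
  | H : context [Nat.ltb ?a ?b] |- _ => destruct (Nat.ltb_spec a b)
  end; simpl in *; try lia.

Lemma move_src_range n m is i :
  (1 <= is <= m)%nat -> (m <= n)%nat -> (1 <= i <= n)%nat -> (1 <= move_src m is i <= n)%nat.
Proof. unfold move_src; nat_cases. Qed.

Lemma move_src_inj m is i i' :
  (is <= m)%nat -> move_src m is i = move_src m is i' -> i = i'.
Proof. unfold move_src; nat_cases. Qed.

Lemma move_dst_range n m is i :
  (1 <= is <= m)%nat -> (m <= n)%nat -> (1 <= i <= n)%nat -> (1 <= move_dst m is i <= n)%nat.
Proof. unfold move_dst; nat_cases. Qed.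

Lemma move_src_dst m is i : (is <= m)%nat -> move_src m is (move_dst m is i) = i.
Proof. unfold move_src, move_dst; nat_cases. Qed.

Lemma move_dst_reverses m is a1 a2 :
  (is <= m)%nat -> (a1 < a2)%nat -> (move_dst m is a2 < move_dst m is a1)%nat ->
  a1 = is /\ (is < a2 <= m)%nat.
Proof. unfold move_dst; nat_cases. Qed.

Lemma par_move n Theta thM tau c m is i :
  par (move n Theta thM tau c m is) i = par c (move_src m is i).
Proof. unfold move, move_src; simpl; destruct (Nat.eqb i m); [| destruct (andb _ _)]; reflexivity. Qed.

Lemma at_pos_move n Theta thM tau c m is j a :
  (1 <= is <= m)%nat -> (m <= n)%nat -> at_pos n c j a ->
  at_pos n (move n Theta thM tau c m is) j (move_dst m is a).
Proof.
  intros His Hm [Ha E]; split; [now apply (move_dst_range n) |].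
  rewrite par_move, move_src_dst; [exact E | lia].
Qed.

Lemma at_pos_move_inv n Theta thM tau c m is j b :
  (1 <= is <= m)%nat -> (m <= n)%nat -> at_pos n (move n Theta thM tau c m is) j b ->
  at_pos n c j (move_src m is b).
Proof.
  intros His Hm [Hb E]; split; [now apply (move_src_range n) |].
  now rewrite <- par_move with (n := n) (Theta := Theta) (thM := thM) (tau := tau).
Qed.

Section Stages.
Variables (n : nat) (Theta : R -> R -> R -> R) (thM : nat -> R) (tau : R).

Notation stage := (stage n Theta thM tau).
Notation stages := (stages n Theta thM tau).

Lemma stage_par_injective m c c' :
  (m <= n)%nat -> stage m c c' -> par_injective n c -> par_injective n c'.
Proof.
  intros Hm [[is [[[His _] _] ->]] | [_ ->]] Hi; [| exact Hi].
  intros i i' Hr Hr' E; rewrite !par_move in E.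
  apply (move_src_inj m is); [lia |].
  apply Hi; auto; apply (move_src_range n); lia.
Qed.

Lemma stages_par_injective m c c' :
  (m <= n)%nat -> stages m c c' -> par_injective n c -> par_injective n c'.
Proof.
  revert c; induction m as [| m IH]; simpl; intros c Hm H Hi.
  - now subst.
  - destruct H as [c1 [H1 H2]].
    apply (IH c1); [lia | exact H2 |].
    exact (stage_par_injective (S m) c c1 Hm H1 Hi).
Qed.

Lemma stage_at_pos_post m c c' j a :
  (m <= n)%nat -> stage m c c' -> at_pos n c j a -> exists a', at_pos n c' j a'.
Proof.
  intros Hm [[is [[[His _] _] ->]] | [_ ->]] Ha; [| now exists a].
  exists (move_dst m is a); now apply at_pos_move.
Qed.

Lemma stages_at_pos_pre m c c' j b :
  (m <= n)%nat -> stages m c c' -> at_pos n c' j b -> exists a, at_pos n c j a.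
Proof.
  revert c b; induction m as [| m IH]; simpl; intros c b Hm H Hb.
  - subst; eauto.
  - destruct H as [c1 [H1 H2]].
    destruct (IH c1 b ltac:(lia) H2 Hb) as [a Ha].
    destruct H1 as [[is [[[His _] _] ->]] | [_ ->]]; [| now exists a].
    exists (move_src (S m) is a); now apply at_pos_move_inv in Ha.
Qed.

Hypothesis Theta_mono : forall w1 w2 z t, w1 <= w2 -> Theta w1 z t <= Theta w2 z t.

Lemma stage_cross_thM m c c' j1 j2 a1 a2 b1 b2 :
  (m <= n)%nat -> stage m c c' -> par_injective n c ->
  at_pos n c j1 a1 -> at_pos n c j2 a2 -> (a1 < a2)%nat ->
  at_pos n c' j1 b1 -> at_pos n c' j2 b2 -> (b1 > b2)%nat ->
  thM j1 > thM j2.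
Proof.
  intros Hm Hst Hi Ha1 Ha2 Ha Hb1 Hb2 Hb.
  pose proof (stage_par_injective m c c' Hm Hst Hi) as Hi'.
  destruct Hst as [[is [[[His [_ Helig]] _] ->]] | [_ ->]].
  2:{ rewrite (at_pos_unique n c j1 b1 a1), (at_pos_unique n c j2 b2 a2) in Hb; auto; lia. }
  rewrite (at_pos_unique _ _ j1 b1 _ Hi' Hb1 (at_pos_move _ _ _ _ _ _ _ _ _ His Hm Ha1)),
          (at_pos_unique _ _ j2 b2 _ Hi' Hb2 (at_pos_move _ _ _ _ _ _ _ _ _ His Hm Ha2)) in Hb.
  destruct (move_dst_reverses m is a1 a2 ltac:(lia) Ha Hb) as [-> Hbetween].
  destruct Ha1 as [_ E1], Ha2 as [_ E2]; unfold wet in Helig.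
  rewrite E1 in Helig.
  destruct (Helig a2 Hbetween) as [[Hdry Hval] | [_ Hgt]]; rewrite E2 in *; [| exact Hgt].
  destruct (Rle_lt_dec (thM j1) (thM j2)) as [Hle | Hlt]; [| exact Hlt].
  exfalso; apply Hdry.
  exact (Rlt_le_trans _ _ _ Hval (Theta_mono _ _ _ _ Hle)).
Qed.

Lemma stages_cross_thM m c c' j1 j2 a1 a2 b1 b2 :
  (m <= n)%nat -> stages m c c' -> par_injective n c ->
  at_pos n c j1 a1 -> at_pos n c j2 a2 -> (a1 < a2)%nat ->
  at_pos n c' j1 b1 -> at_pos n c' j2 b2 -> (b1 > b2)%nat ->
  thM j1 > thM j2.
Proof.
  revert c a1 a2; induction m as [| m IH]; simpl;
    intros c a1 a2 Hm H Hi Ha1 Ha2 Ha Hb1 Hb2 Hb.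
  - subst c'.
    rewrite (at_pos_unique n c j1 b1 a1), (at_pos_unique n c j2 b2 a2) in Hb; auto; lia.
  - destruct H as [c1 [H1 H2]].
    pose proof (stage_par_injective (S m) c c1 Hm H1 Hi) as Hi1.
    destruct (stage_at_pos_post (S m) c c1 j1 a1 Hm H1 Ha1) as [a1' Ha1'].
    destruct (stage_at_pos_post (S m) c c1 j2 a2 Hm H1 Ha2) as [a2' Ha2'].
    destruct (Nat.lt_total a1' a2') as [Hlt | [Heq | Hgt]].
    + exact (IH c1 a1' a2' ltac:(lia) H2 Hi1 Ha1' Ha2' Hlt Hb1 Hb2 Hb).
    + subst a2'.
      rewrite (at_pos_par_inj n c1 j1 j2 a1' Ha1' Ha2') in Ha1.
      pose proof (at_pos_unique n c j2 a1 a2 Hi Ha1 Ha2); lia.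
    + exact (stage_cross_thM (S m) c c1 j1 j2 a1 a2 a1' a2' Hm H1 Hi Ha1 Ha2 Ha Ha1' Ha2' Hgt).
Qed.

End Stages.

Theorem lemma3p5
  (Qsat Theta : R -> R -> R -> R)
  (HQth : forall th z t, exists d, derivable_pt_lim (fun x => Qsat x z t) th d /\ 0 < d)
  (HQz : forall th z t, exists d, derivable_pt_lim (fun x => Qsat th x t) z d /\ d < 0)
  (HTheta : forall w z t, Theta w z t + Qsat (Theta w z t) z t = w)
  (HThw : forall w z t, exists d, derivable_pt_lim (fun x => Theta x z t) w d /\ 0 < d)
  (HThz : forall w z t, exists d, derivable_pt_lim (fun x => Theta w x t) z d /\ 0 < d)
  (n : nat) (Hn : (1 <= n)%nat) (dt : R) (Hdt : 0 < dt)
  (thn q : nat -> R)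
  (Hsort : forall j1 j2, (1 <= j1)%nat -> (j1 <= j2)%nat -> (j2 <= n)%nat -> thn j1 <= thn j2)
  (Hq : forall j, (1 <= j <= n)%nat -> q j <= Qsat (thn j) (zpt n j) 0)
  (C : nat -> config)
  (HC0 : forall i, (1 <= i <= n)%nat -> par (C 0%nat) i = i /\ val (C 0%nat) i = thn i)
  (HCstep : forall k, time_step n Theta (fun j => thn j + q j)
                        (INR (S k) * dt) (C k) (C (S k)))
  (j1 j2 k : nat) (Hj1 : (1 <= j1 <= n)%nat) (Hj2 : (1 <= j2 <= n)%nat)
  (a1 a2 b1 b2 : nat)
  (Ha1 : at_pos n (C k) j1 a1) (Ha2 : at_pos n (C k) j2 a2) (Ha : (a1 < a2)%nat)
  (Hb1 : at_pos n (C (S k)) j1 b1) (Hb2 : at_pos n (C (S k)) j2 b2) (Hb : (b1 > b2)%nat) :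
  thn j1 + q j1 > thn j2 + q j2 /\
  (forall l p1 p2, (l > k)%nat -> at_pos n (C l) j1 p1 -> at_pos n (C l) j2 p2 ->
     (p1 > p2)%nat).
Proof.
  set (thM := fun j => thn j + q j).
  assert (Theta_mono : forall w1 w2 z t, w1 <= w2 -> Theta w1 z t <= Theta w2 z t).
  { intros w1 w2 z t.
    apply (nondecreasing_of_derivative_nonneg (fun w => Theta w z t)).
    intro w; destruct (HThw w z t) as [d [Hd Hpos]]; exists d; split; [exact Hd | lra]. }
  assert (Hinj : forall l, par_injective n (C l)).
  { induction l as [| l IH].
    - intros i i' Hi Hi' E; now rewrite (proj1 (HC0 i Hi)), (proj1 (HC0 i' Hi')) in E.
    - exact (stages_par_injective n Theta thM _ n _ _ (le_n n) (HCstep l) IH). }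
  assert (Hcross : forall l i1 i2 c1 c2 d1 d2,
            at_pos n (C l) i1 c1 -> at_pos n (C l) i2 c2 -> (c1 < c2)%nat ->
            at_pos n (C (S l)) i1 d1 -> at_pos n (C (S l)) i2 d2 -> (d1 > d2)%nat ->
            thM i1 > thM i2).
  { intros l i1 i2 c1 c2 d1 d2.
    exact (stages_cross_thM n Theta thM _ Theta_mono n _ _ i1 i2 c1 c2 d1 d2
             (le_n n) (HCstep l) (Hinj l)). }
  pose proof (Hcross k j1 j2 a1 a2 b1 b2 Ha1 Ha2 Ha Hb1 Hb2 Hb) as Hgt.
  split; [exact Hgt |].
  intros l p1 p2 Hl; revert p1 p2.
  induction Hl as [| l Hl IH]; intros p1 p2 Hp1 Hp2.
  - rewrite (at_pos_unique _ _ _ _ _ (Hinj (S k)) Hp1 Hb1),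
            (at_pos_unique _ _ _ _ _ (Hinj (S k)) Hp2 Hb2); exact Hb.
  - destruct (stages_at_pos_pre n Theta thM _ n _ _ j1 p1 (le_n n) (HCstep l) Hp1) as [r1 Hr1].
    destruct (stages_at_pos_pre n Theta thM _ n _ _ j2 p2 (le_n n) (HCstep l) Hp2) as [r2 Hr2].
    destruct (Nat.lt_total p1 p2) as [Hlt | [-> | Hgt']]; [| | exact Hgt'].
    + pose proof (Hcross l j2 j1 r2 r1 p2 p1 Hr2 Hr1 (IH r1 r2 Hr1 Hr2) Hp2 Hp1 Hlt); lra.
    + rewrite (at_pos_par_inj n _ j1 j2 p2 Hp1 Hp2) in Hgt; lra.
Qed.
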